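(* Let $G$ be a finite simple connected graph of order $n\ge 3$. Then $W_3(G)\ge \frac{n-2}{2}W(G)$. Equality holds if and only if $G$ contains no three vertices $u,v,w$ such that $2\max\{d(u,v),d(u,w),d(v,w)\}<d(u,v)+d(u,w)+d(v,w)$ and every choice of three shortest paths between the three pairs $(u,v),(v,w),(w,u)$ consists of pairwise edge-disjoint paths.
   Context: $d(u,v)$ is the graph distance and $W(G)=\sum_{\{u,v\}\subseteq V}d(u,v)$ is the Wiener index. For a set $S$ of vertices, the Steiner distance $d_3(S)$ (for $|S|=3$) is the minimum number of edges of a connected subgraph (equivalently a subtree) of $G$ containing $S$, and $W_3(G)=\sum_{S\subseteq V,\,|S|=3}d_3(S)$. *)

From mathcomp Require Import all_boot.
Set Implicit Arguments. Unset Strict Implicit. Unset Printing Implicit Defensive.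

Section Graph.
Variables (T : finType) (e : rel T).

(* A walk from x to y : the sequence p of vertices after x, with e-steps,
   ending at y; its length (number of edges) is size p. *)
Definition is_walk (x y : T) (p : seq T) : bool := path e x p && (last x p == y).

(* Graph distance d(x,y): least k such that a walk of length k from x to y
   exists (searched in 0..#|T|-1; for a connected graph this is exact). *)
Definition dist (x y : T) : nat :=
  find (fun k => [exists p : k.-tuple T, is_walk x y p]) (iota 0 #|T|).

Definition wiener : nat :=
  \sum_(u : T) \sum_(v : T | enum_rank u < enum_rank v) dist u v.

Definition is_subgraph (X : {set T}) (F : {set {set T}}) : bool :=
  [forall f in F, [exists a, exists b,
     [&& f == [set a; b], e a b, a \in X & b \in X]]].

Definition subgraph_connected (X : {set T}) (F : {set {set T}}) : bool :=
  (X != set0) &&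
  [forall u in X, forall v in X, connect (fun a b => [set a; b] \in F) u v].

Definition steiner (S : {set T}) : nat :=
  find (fun k => [exists X : {set T}, exists F : {set {set T}},
          [&& S \subset X, is_subgraph X F, subgraph_connected X F
            & #|F| == k]])
       (iota 0 #|{set {set T}}|.+1).

Definition wiener3 : nat := \sum_(S : {set T} | #|S| == 3) steiner S.

Definition shortest_path (x y : T) (p : seq T) : Prop :=
  is_walk x y p /\ size p = dist x y.

Definition walk_edges (x : T) (p : seq T) : seq {set T} :=
  pairmap (fun a b => [set a; b]) x p.

Definition edge_disjoint (x1 : T) (p1 : seq T) (x2 : T) (p2 : seq T) : bool :=
  ~~ has (mem (walk_edges x1 p1)) (walk_edges x2 p2).

End Graph.

From mathcomp Require Import all_boot zify.
Set Implicit Arguments. Unset Strict Implicit. Unset Printing Implicit Defensive.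

(* For vertices u, v, w, follow a path from w inside a minimum connected
   subgraph containing them until it first meets a path from u to v in that
   subgraph, at x; the two paths use distinct edges, hence
   d_3(u,v,w) = min_x (d(x,u) + d(x,v) + d(x,w)), and by the triangle inequality
   this is at least half the perimeter d(u,v) + d(u,w) + d(v,w). Every pair of
   vertices lies in n - 2 three-sets, so summing over the 3-sets gives
   (n - 2) W <= 2 W_3, with equality iff every triple has a median: a vertex x
   with 2 (d(x,u) + d(x,v) + d(x,w)) equal to the perimeter.
   If 2 max < perimeter, a median x differs from u, and geodesics from u through
   x to v and to w share their first edge. Conversely, a triple without median
   of least perimeter has pairwise edge-disjoint geodesics: if geodesics from a
   to c and from c to z shared an edge, its end b <> c lies on both, and the
   triple a, b, z would have no median and a smaller perimeter. *)

Lemma find_iota_leq (P : pred nat) n k : k < n -> P k -> find P (iota 0 n) <= k.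
Proof.
move=> lt_kn Pk; rewrite leqNgt; apply/negP => /(before_find 0).
by rewrite nth_iota // add0n Pk.
Qed.

Lemma find_iota_sat (P : pred nat) n k : k < n -> P k -> P (find P (iota 0 n)).
Proof.
move=> lt_kn Pk; have has_P : has P (iota 0 n).
  by apply/hasP; exists k; rewrite ?mem_iota.
have := nth_find 0 has_P; rewrite nth_iota ?add0n //.
by rewrite -[X in _ < X](size_iota 0 n) -has_find.
Qed.

Lemma sum_sym_pairs (I : finType) (f : I -> I -> nat) :
  (forall i j, f i j = f j i) -> (forall i, f i i = 0) ->
  \sum_i \sum_j f i j = 2 * \sum_i \sum_(j | enum_rank i < enum_rank j) f i j.
Proof.
move=> f_sym f_diag.
have row i : \sum_j f i j = \sum_(j | enum_rank i < enum_rank j) f i j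
                          + \sum_(j | enum_rank j < enum_rank i) f j i.
  rewrite (bigID (fun j => enum_rank i < enum_rank j)) /=; congr (_ + _).
  rewrite (bigID (fun j => enum_rank j < enum_rank i)) /= [X in _ + X]big1 ?addn0.
    apply: eq_big => [j | j _]; last exact: f_sym.
    by apply: andb_idl => /ltnW; rewrite leqNgt.
  move=> j; rewrite -!leqNgt => /andP[le_ji le_ij].
  have /val_inj/enum_rank_inj -> : (enum_rank j : nat) = enum_rank i.
    by apply/anti_leq; rewrite le_ij le_ji.
  exact: f_diag.
rewrite (eq_bigr _ (fun i _ => row i)) big_split /= mul2n -addnn; congr (_ + _).
by rewrite (exchange_big_dep predT).
Qed.

Lemma card_3sets_through (T : finType) (a b : T) : a != b ->
  #|[set S : {set T} | [&& #|S| == 3, a \in S & b \in S]]| = #|T| - 2.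
Proof.
move=> a_b.
suff -> : [set S : {set T} | [&& #|S| == 3, a \in S & b \in S]] =
          (fun c => c |: [set a; b]) @: ~: [set a; b].
  rewrite card_in_imset; first by rewrite -(cardsC [set a; b]) cards2 a_b addKn.
  move=> c c'; rewrite !inE => c_ab c'_ab /setP /(_ c).
  by rewrite !inE eqxx (negbTE c_ab) !orbF => /esym/eqP.
apply/setP => S; rewrite inE; apply/and3P/imsetP => [[/eqP S3 a_S b_S] | [c]].
  have ab_S : [set a; b] \subset S by apply/subsetP => z /set2P[] ->.
  have /cards1P[c S_ab] : #|S :\: [set a; b]| == 1.
    by rewrite cardsD (setIidPr ab_S) cards2 a_b S3.
  have /setDP[c_S c_ab] : c \in S :\: [set a; b] by rewrite S_ab set11.
  exists c; first by rewrite inE.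
  apply/setP => z; move/setP/(_ z): S_ab; rewrite !inE.
  case: (boolP ((z == a) || (z == b))) => [/orP[] /eqP -> _ | _ /= <-];
    by rewrite ?a_S ?b_S ?orbT ?orbF.
rewrite inE => c_ab ->.
by rewrite cardsU1 c_ab cards2 a_b !inE !eqxx !orbT.
Qed.

Lemma cards3P (T : finType) (S : {set T}) :
  reflect (exists u v w, [/\ u \notin [set v; w], v != w & S = [set u; v; w]])
          (#|S| == 3).
Proof.
apply: (iffP idP) => [S3 | [u [v [w [u_vw v_w ->]]]]]; last first.
  by rewrite -setUA cardsU1 u_vw cards2 v_w.
have /card_gt0P[u u_S] : 0 < #|S| by rewrite (eqP S3).
have /cards2P[v [w [v_w Su]]] : #|S :\ u| == 2 by rewrite (cardsD1 u) u_S in S3.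
exists u, v, w; split => //; first by have := setD11 u S; rewrite Su => ->.
by rewrite -{1}(setD1K u_S) Su setUA.
Qed.

Lemma sum_triple (T : finType) (G : T -> nat) u v w :
  u \notin [set v; w] -> v != w -> \sum_(a in [set u; v; w]) G a = G u + G v + G w.
Proof.
by move=> u_vw v_w; rewrite -setUA big_setU1 // big_setU1 ?inE // big_set1 -addnA.
Qed.

Section Graph.
Variables (T : finType) (e : rel T).
Hypothesis e_sym : symmetric e.
Hypothesis e_irr : irreflexive e.
Hypothesis e_conn : forall u v : T, connect e u v.

Local Notation d := (dist e).

(** * Walks and distances *)

Lemma is_walk_cat x y z p q :
  is_walk e x y p -> is_walk e y z q -> is_walk e x z (p ++ q).
Proof.
rewrite /is_walk => /andP[p_path /eqP <-] /andP[q_path /eqP <-].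
by rewrite cat_path p_path q_path last_cat eqxx.
Qed.

Lemma last_rev_belast (x : T) p : last (last x p) (rev (belast x p)) = x.
Proof. by case: p => //= y p; rewrite rev_cons last_rcons. Qed.

Lemma is_walk_rev x y p : is_walk e x y p -> is_walk e y x (rev (belast x p)).
Proof.
rewrite /is_walk => /andP[p_path /eqP <-].
rewrite last_rev_belast eqxx andbT rev_path.
by rewrite (eq_path (e' := e)) // => a b; rewrite e_sym.
Qed.

Lemma dist_le_size x y p : is_walk e x y p -> d x y <= size p.
Proof.
move=> p_walk; have [lt_pT | le_Tp] := ltnP (size p) #|T|.
  by apply: find_iota_leq lt_pT _; apply/existsP; exists (in_tuple p).
apply: leq_trans le_Tp; rewrite -[X in _ <= X](size_iota 0 #|T|).
exact: find_size.
Qed.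

Lemma connect_uniq_path (R : rel T) x y :
  connect R x y -> exists p, [/\ path R x p, uniq (x :: p) & last x p = y].
Proof. by case/connectP => p /shortenP[p' p'_path p'_uniq _] ->; exists p'. Qed.

Lemma exists_shortest_path x y : exists p, shortest_path e x y p.
Proof.
have [p [p_path p_uniq <-]] := connect_uniq_path (e_conn x y).
have lt_pT : size p < #|T|.
  by rewrite -ltnS -[(size p).+1](card_uniqP p_uniq) ltnS max_card.
have p_tuple : [exists q : (size p).-tuple T, is_walk e x (last x p) q].
  by apply/existsP; exists (in_tuple p); rewrite /is_walk p_path /=.
have /existsP[q q_walk] := find_iota_sat
  (P := fun k => [exists q : k.-tuple T, is_walk e x (last x p) q]) lt_pT p_tuple.
by exists q; split; rewrite ?size_tuple.
Qed.

Lemma dist_sym x y : d x y = d y x.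
Proof.
suff le_dist a b : d a b <= d b a by apply/eqP; rewrite eqn_leq !le_dist.
have [p [p_walk <-]] := exists_shortest_path b a.
by rewrite -(size_belast b) -size_rev; apply/dist_le_size/is_walk_rev.
Qed.

Lemma dist_triangle x y z : d x z <= d x y + d y z.
Proof.
have [p [p_walk <-]] := exists_shortest_path x y.
have [q [q_walk <-]] := exists_shortest_path y z.
by rewrite -size_cat; apply/dist_le_size/(is_walk_cat p_walk q_walk).
Qed.

Lemma dist_xx x : d x x = 0.
Proof.
by apply/eqP; rewrite -leqn0 (@dist_le_size _ _ [::]) // /is_walk /= eqxx.
Qed.

Lemma dist_eq0 x y : (d x y == 0) = (x == y).
Proof.
apply/eqP/eqP => [|->]; last exact: dist_xx.
have [p [p_walk <-]] := exists_shortest_path x y.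
by move/size0nil=> p_nil; move: p_walk; rewrite p_nil /is_walk /= => /eqP.
Qed.

Lemma shortest_path_split a c p y :
  shortest_path e a c p -> y \in a :: p -> d a y + d y c = d a c.
Proof.
case=> p_walk p_size /splitPl y_p.
case: y_p p_walk p_size => p1 p2 p1_last.
rewrite /is_walk cat_path last_cat p1_last size_cat.
case/andP=> /andP[p1_path p2_path] p2_last p_size.
have le_ay : d a y <= size p1.
  by apply: dist_le_size; rewrite /is_walk p1_path p1_last /=.
have le_yc : d y c <= size p2.
  by apply: dist_le_size; rewrite /is_walk p2_path p2_last.
by apply/eqP; rewrite eqn_leq dist_triangle andbT -p_size leq_add.
Qed.

Lemma walk_edge_ends (R : rel T) x p f : path R x p -> f \in walk_edges x p ->
  exists a b, [/\ f = [set a; b], R a b, a \in belast x p & b \in p].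
Proof.
elim: p x => [|y p IHp] x //= /andP[Rxy p_path]; rewrite inE => /orP[/eqP -> | f_p].
  by exists x, y; rewrite Rxy !mem_head.
have [a [b [-> Rab a_p b_p]]] := IHp y p_path f_p.
by exists a, b; rewrite Rab !inE a_p b_p !orbT.
Qed.

Lemma walk_edges_vertex (x : T) p f y :
  f \in walk_edges x p -> y \in f -> y \in x :: p.
Proof.
elim: p x => [|z p IHp] x //=; rewrite inE => /orP[/eqP -> | f_p].
  by rewrite !inE => /orP[] ->; rewrite ?orbT.
by move=> y_f; rewrite inE (IHp z f_p y_f) orbT.
Qed.

Lemma walk_edges_belast (x : T) p f :
  f \in walk_edges x p -> exists2 y, y \in f & y \in belast x p.
Proof.
elim: p x => [|z p IHp] x //=; rewrite inE => /orP[/eqP -> | f_p].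
  by exists x; rewrite !inE eqxx.
by have [y y_f y_p] := IHp z f_p; exists y; rewrite ?inE ?y_p ?orbT.
Qed.

Lemma uniq_walk_edges (x : T) p : uniq (x :: p) -> uniq (walk_edges x p).
Proof.
elim: p x => [|z p IHp] x //= /andP[x_p p_uniq]; rewrite IHp // andbT.
by apply/negP => /walk_edges_vertex /(_ (set21 x z)); apply/negP.
Qed.

Lemma walk_edges_cat (x : T) p q :
  walk_edges x (p ++ q) = walk_edges x p ++ walk_edges (last x p) q.
Proof. exact: pairmap_cat. Qed.

Lemma walk_edges_rev (x : T) p f :
  f \in walk_edges x p -> f \in walk_edges (last x p) (rev (belast x p)).
Proof.
elim: p x => [|z p IHp] x //=; rewrite rev_cons -cats1 walk_edges_cat mem_cat.
rewrite last_rev_belast inE => /orP[/eqP -> | /IHp -> //].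
by rewrite /walk_edges /= inE setUC eqxx orbT.
Qed.

Definition edge_rel (F : {set {set T}}) : rel T := fun a b => [set a; b] \in F.

Lemma edge_rel_sym F : symmetric (edge_rel F).
Proof. by move=> a b; rewrite /edge_rel setUC. Qed.

Lemma walk_edges_connect (F : {set {set T}}) (x : T) p y :
  {subset walk_edges x p <= F} -> y \in x :: p -> connect (edge_rel F) x y.
Proof.
elim: p x => [|z p IHp] x /= p_F; first by rewrite inE => /eqP ->.
rewrite inE => /orP[/eqP -> // | y_p].
apply: connect_trans (IHp z _ y_p); first by apply/connect1/p_F; rewrite mem_head.
by move=> f f_p; apply: p_F; rewrite inE f_p orbT.
Qed.

(** * Steiner distance of three vertices *)

Lemma set2_eq (a b c c' : T) :
  [set a; b] = [set c; c'] -> (a = c /\ b = c') \/ (a = c' /\ b = c).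
Proof.
move=> eq_ab.
have : a \in [set c; c'] by rewrite -eq_ab set21.
have : b \in [set c; c'] by rewrite -eq_ab set22.
have : c \in [set a; b] by rewrite eq_ab set21.
have : c' \in [set a; b] by rewrite eq_ab set22.
rewrite !inE => /orP[] /eqP c'E /orP[] /eqP cE /orP[] /eqP bE /orP[] /eqP aE;
  by subst; auto.
Qed.

Lemma subgraph_edge X F : is_subgraph e X F -> subrel (edge_rel F) e.
Proof.
move=> /forall_inP X_F a b /X_F /existsP[a' /existsP[b' /and4P[/eqP ab_a'b' + _ _]]].
by case: (set2_eq ab_a'b') => -[-> ->]; rewrite // e_sym.
Qed.

Definition connecting_subgraph (S X : {set T}) (F : {set {set T}}) : bool :=
  [&& S \subset X, is_subgraph e X F & subgraph_connected X F].

Lemma card_edge_set_lt (F : {set {set T}}) : #|F| < #|{set {set T}}|.+1.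
Proof.
rewrite ltnS (leq_trans (max_card F)) //.
exact: leq_card (@set1_inj {set T}).
Qed.

Lemma steiner_le S X F : connecting_subgraph S X F -> steiner e S <= #|F|.
Proof.
case/and3P=> S_X X_F X_conn; apply: find_iota_leq (card_edge_set_lt F) _.
by apply/existsP; exists X; apply/existsP; exists F; rewrite S_X X_F X_conn eqxx.
Qed.

Lemma steiner_attained S X F : connecting_subgraph S X F ->
  exists X' F', connecting_subgraph S X' F' /\ #|F'| = steiner e S.
Proof.
case/and3P=> S_X X_F X_conn.
pose P k := [exists X : {set T}, exists F : {set {set T}},
  [&& S \subset X, is_subgraph e X F, subgraph_connected X F & #|F| == k]].
have P_F : P #|F|.
  by apply/existsP; exists X; apply/existsP; exists F; rewrite S_X X_F X_conn eqxx.
have /existsP[X' /existsP[F' /and4P[S_X' X_F' X_conn' /eqP F'_card]]] :=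
  find_iota_sat (P := P) (card_edge_set_lt F) P_F.
by exists X', F'; rewrite /connecting_subgraph S_X' X_F' X_conn'.
Qed.

Lemma walks_connecting_subgraph x (S : {set T}) (ps : seq (seq T)) :
  all (path e x) ps -> {subset S <= map (last x) ps} ->
  exists X F, connecting_subgraph S X F /\ #|F| <= sumn (map size ps).
Proof.
move=> /allP ps_path S_ends.
pose X := [set z in x :: flatten ps].
pose F := [set f in flatten (map (walk_edges x) ps)].
have in_X p z : p \in ps -> z \in x :: p -> z \in X.
  move=> p_ps; rewrite !inE => /orP[-> // | z_p].
  by apply/orP; right; apply/flattenP; exists p.
have in_F p f : p \in ps -> f \in walk_edges x p -> f \in F.
  move=> p_ps f_p; rewrite inE; apply/flattenP.
  by exists (walk_edges x p); rewrite ?map_f.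
have x_conn z : z \in X -> connect (edge_rel F) x z.
  rewrite !inE => /orP[/eqP -> // | /flattenP[p p_ps z_p]].
  apply: (walk_edges_connect (p := p)); last by rewrite inE z_p orbT.
  by move=> f; apply: in_F.
exists X, F; split; last first.
  rewrite cardsE (leq_trans (card_size _)) // size_flatten.
  suff -> : shape (map (walk_edges x) ps) = map size ps by [].
  by rewrite /shape -map_comp; apply: eq_map => p; apply: size_pairmap.
apply/and3P; split.
- apply/subsetP => z /S_ends /mapP[p p_ps ->]; exact: in_X (mem_last x p).
- apply/forall_inP => f; rewrite inE => /flattenP[_ /mapP[p p_ps ->] f_p].
  have [a [b [-> e_ab a_p b_p]]] := walk_edge_ends (ps_path p p_ps) f_p.
  apply/existsP; exists a; apply/existsP; exists b.
  by rewrite eqxx e_ab (in_X p a) ?(in_X p b) ?(mem_belast a_p) // inE b_p orbT.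
- apply/andP; split; first by apply/set0Pn; exists x; rewrite inE mem_head.
  apply/forall_inP => y y_X; apply/forall_inP => z z_X.
  apply: connect_trans (x_conn z z_X).
  by rewrite (sym_connect_sym (@edge_rel_sym F)) x_conn.
Qed.

Definition perimeter u v w := d u v + d u w + d v w.

Definition dist_sum x u v w := d x u + d x v + d x w.

Lemma triple_connecting_subgraph x u v w :
  exists X F, connecting_subgraph [set u; v; w] X F /\ #|F| <= dist_sum x u v w.
Proof.
rewrite /dist_sum.
have [p1 [/andP[p1_path /eqP p1_last] <-]] := exists_shortest_path x u.
have [p2 [/andP[p2_path /eqP p2_last] <-]] := exists_shortest_path x v.
have [p3 [/andP[p3_path /eqP p3_last] <-]] := exists_shortest_path x w.
have ps_path : all (path e x) [:: p1; p2; p3] by rewrite /= p1_path p2_path p3_path.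
have S_ends : {subset [set u; v; w] <= map (last x) [:: p1; p2; p3]}.
  by move=> z; rewrite !inE /= p1_last p2_last p3_last orbA.
have [X [F [XF F_card]]] := walks_connecting_subgraph ps_path S_ends.
by exists X, F; rewrite XF /= addn0 addnA in F_card *.
Qed.

Lemma steiner3_le_dist_sum x u v w : steiner e [set u; v; w] <= dist_sum x u v w.
Proof.
have [X [F [XF F_card]]] := triple_connecting_subgraph x u v w.
exact: leq_trans (steiner_le XF) F_card.
Qed.

Lemma split_first_hit (a : pred T) w q : a (last w q) ->
  exists q1 q2, [/\ q = q1 ++ q2, a (last w q1) & ~~ has a (belast w q1)].
Proof.
elim: q w => [|z q IHq] w /= a_last; first by exists [::], [::].
case a_w: (a w); first by exists [::], (z :: q).
have [q1 [q2 [-> a_q1 q1_a]]] := IHq z a_last.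
by exists (z :: q1), q2; rewrite /= a_w q1_a.
Qed.

Lemma size_disjoint_walks_le (F : {set {set T}}) x p y q :
  path (edge_rel F) x p -> path (edge_rel F) y q ->
  uniq (x :: p) -> uniq (y :: q) -> ~~ has (mem (x :: p)) (belast y q) ->
  size p + size q <= #|F|.
Proof.
move=> p_path q_path p_uniq q_uniq q_p.
rewrite -(size_pairmap (fun a b => [set a; b]) x p).
rewrite -(size_pairmap (fun a b => [set a; b]) y q) -size_cat cardE.
apply: uniq_leq_size => [|f].
  rewrite cat_uniq !uniq_walk_edges //= andbT; apply/hasP => -[f f_q f_p].
  have [z z_f z_q] := walk_edges_belast f_q.
  by case/hasP: q_p; exists z => //; exact: walk_edges_vertex f_p z_f.
rewrite mem_cat mem_enum => /orP[] f_w.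
  by have [a [b [-> ab _ _]]] := walk_edge_ends p_path f_w.
by have [a [b [-> ab _ _]]] := walk_edge_ends q_path f_w.
Qed.

Lemma steiner3_ge_dist_sum u v w :
  exists x, dist_sum x u v w <= steiner e [set u; v; w].
Proof.
have [X0 [F0 [XF0 _]]] := triple_connecting_subgraph u u v w.
have [X [F [XF <-]]] := steiner_attained XF0.
case/and3P: XF => S_X X_F /andP[_ /forall_inP X_conn].
have conn z1 z2 : z1 \in [set u; v; w] -> z2 \in [set u; v; w] ->
    connect (edge_rel F) z1 z2.
  by move=> /(subsetP S_X) /X_conn /forall_inP z1_conn /(subsetP S_X) /z1_conn.
have u_S : u \in [set u; v; w] by rewrite !inE eqxx.
have v_S : v \in [set u; v; w] by rewrite !inE eqxx orbT.
have w_S : w \in [set u; v; w] by rewrite !inE eqxx !orbT.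
have [p [p_path p_uniq p_last]] := connect_uniq_path (conn u v u_S v_S).
have [q [q_path q_uniq q_last]] := connect_uniq_path (conn w u w_S u_S).
have [|q1 [q2 [def_q]]] := split_first_hit (a := mem (u :: p)) (w := w) (q := q).
  by rewrite q_last /= mem_head.
set x := last w q1 => x_p q1_p.
move: q_path q_uniq; rewrite def_q cat_path -cat_cons cat_uniq.
case/andP=> q1_path _ /andP[q1_uniq _].
have le_F := size_disjoint_walks_le p_path q1_path p_uniq q1_uniq q1_p.
case/splitPl: x_p p_path p_last le_F => p1 p2 p1_last.
rewrite cat_path last_cat size_cat p1_last => /andP[p1_path p2_path] p2_last le_F.
have F_e := sub_path (subgraph_edge X_F).
have d_ux : d u x <= size p1.
  by apply: dist_le_size; rewrite /is_walk p1_last eqxx andbT F_e.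
have d_xv : d x v <= size p2.
  by apply: dist_le_size; rewrite /is_walk p2_last eqxx andbT F_e.
have d_wx : d w x <= size q1.
  by apply: dist_le_size; rewrite /is_walk eqxx andbT F_e.
exists x; apply: leq_trans le_F.
rewrite /dist_sum (dist_sym x u) (dist_sym x w).
exact: leq_add (leq_add d_ux d_xv) d_wx.
Qed.

(** * Medians *)

(* [x] lies on a shortest path between any two of [u], [v], [w]; by
   [perimeter_le_dist_sum] the inequality is then an equality. *)
Definition median x u v w : bool := 2 * dist_sum x u v w <= perimeter u v w.

Definition no_median u v w : bool := [forall x, ~~ median x u v w].

Lemma perimeter_le_dist_sum x u v w : perimeter u v w <= 2 * dist_sum x u v w.
Proof.
have := dist_triangle u x v; have := dist_triangle u x w.
have := dist_triangle v x w; have := dist_sym x u; have := dist_sym x v.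
rewrite /perimeter /dist_sum; lia.
Qed.

Lemma perimeter_le_steiner3 u v w : perimeter u v w <= 2 * steiner e [set u; v; w].
Proof.
have [x le_x] := steiner3_ge_dist_sum u v w.
by rewrite (leq_trans (perimeter_le_dist_sum x u v w)) // leq_mul2l le_x orbT.
Qed.

Lemma steiner3_medianP u v w : reflect (exists x, median x u v w)
  (2 * steiner e [set u; v; w] == perimeter u v w).
Proof.
apply: (iffP eqP) => [st_per | [x med]].
  have [x le_x] := steiner3_ge_dist_sum u v w.
  by exists x; rewrite /median -st_per leq_mul2l le_x orbT.
apply/eqP; rewrite eqn_leq perimeter_le_steiner3 andbT (leq_trans _ med) //.
by rewrite leq_mul2l steiner3_le_dist_sum orbT.
Qed.

Lemma median_degenerate u v w :
  ~~ [&& u \notin [set v; w] & v != w] -> exists x, median x u v w.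
Proof.
rewrite negb_and !negbK !inE -orbA => /or3P[] /eqP <-;
  [exists u | exists u | exists v];
  by rewrite /median /dist_sum /perimeter !dist_xx ?(dist_sym v u); lia.
Qed.

Lemma perimeter_rot u v w : perimeter v w u = perimeter u v w.
Proof. by have := dist_sym u v; have := dist_sym u w; rewrite /perimeter; lia. Qed.

Lemma no_median_rot u v w : no_median v w u = no_median u v w.
Proof.
apply: eq_forallb => x; rewrite /median perimeter_rot /dist_sum.
by rewrite addnC addnA.
Qed.

Lemma median_shared_edge x u v w : median x u v w ->
  2 * maxn (d u v) (maxn (d u w) (d v w)) < perimeter u v w ->
  exists p1 p3, [/\ shortest_path e u v p1, shortest_path e w u p3
                  & ~~ edge_disjoint u p1 w p3].
Proof.
move=> med strict.
have [d_uv d_wu d_ux] :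
    [/\ d u v = d u x + d x v, d w u = d w x + d x u & 0 < d u x].
  move: med strict; rewrite /median /dist_sum /perimeter.
  have := dist_triangle u x v; have := dist_triangle u x w.
  have := dist_triangle v x w; have := dist_sym x u; have := dist_sym x v.
  have := dist_sym x w; have := dist_sym w u.
  by move=> *; split; lia.
have [g1 [g1_walk g1_size]] := exists_shortest_path u x.
have [g2 [g2_walk g2_size]] := exists_shortest_path x v.
have [g3 [g3_walk g3_size]] := exists_shortest_path w x.
exists (g1 ++ g2), (g3 ++ rev (belast u g1)); split.
- split; first exact: is_walk_cat g1_walk g2_walk.
  by rewrite size_cat g1_size g2_size d_uv.
- split; first exact: is_walk_cat g3_walk (is_walk_rev g1_walk).
  by rewrite size_cat size_rev size_belast g1_size g3_size d_wu (dist_sym u x).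
case: g1 g1_walk g1_size => [|y g1] g1_walk g1_size.
  by rewrite -g1_size in d_ux.
rewrite /edge_disjoint negbK; apply/hasP; exists [set u; y].
  rewrite walk_edges_cat mem_cat; apply/orP; right.
  have -> : last w g3 = last u (y :: g1).
    by case/andP: g3_walk => _ /eqP ->; case/andP: g1_walk => _ /eqP ->.
  by apply: walk_edges_rev; rewrite /walk_edges /= mem_head.
by rewrite /walk_edges /= mem_head.
Qed.

Lemma shortest_paths_shared_vertex a c z p q :
  shortest_path e a c p -> shortest_path e c z q -> ~~ edge_disjoint a p c q ->
  exists2 b, b != c & d a b + d b c = d a c /\ d c b + d b z = d c z.
Proof.
move=> p_sp q_sp; rewrite /edge_disjoint negbK => /hasP[f f_q f_p].
have [/andP[q_path _] _] := q_sp.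
have [y [y' [def_f e_yy' y_q y'_q]]] := walk_edge_ends q_path f_q.
pose b := if y == c then y' else y.
have b_c : b != c.
  rewrite /b; case: (y =P c) => [y_c | /eqP //].
  by apply: contraTneq e_yy' => y'_c; rewrite y_c y'_c e_irr.
have b_f : b \in f by rewrite def_f /b; case: (y =P c); rewrite !inE eqxx ?orbT.
have b_q : b \in c :: q.
  rewrite /b; case: (y =P c) => _; last exact: mem_belast y_q.
  by rewrite inE y'_q orbT.
exists b => //; split; last exact: shortest_path_split q_sp b_q.
exact: shortest_path_split p_sp (walk_edges_vertex f_p b_f).
Qed.

Lemma no_median_shortcut a c z b : no_median a c z -> b != c ->
  d a b + d b c = d a c -> d c b + d b z = d c z ->
  no_median a b z /\ perimeter a b z < perimeter a c z.
Proof.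
move=> /forallP no_med b_c d_abc d_cbz.
have d_bc : 0 < d b c by rewrite lt0n dist_eq0.
rewrite (dist_sym c b) in d_cbz.
split; last by rewrite /perimeter; lia.
apply/forallP => x; have := no_med x; have := dist_triangle x b c.
by rewrite /median /dist_sum /perimeter; lia.
Qed.

Lemma consecutive_geodesics_disjoint a c z p q : no_median a c z ->
  (forall u v w, no_median u v w -> perimeter a c z <= perimeter u v w) ->
  shortest_path e a c p -> shortest_path e c z q -> edge_disjoint a p c q.
Proof.
move=> no_med min_acz p_sp q_sp; apply: contraT => shared.
have [b b_c [d_abc d_cbz]] := shortest_paths_shared_vertex p_sp q_sp shared.
have [no_med' lt_per] := no_median_shortcut no_med b_c d_abc d_cbz.
by have := min_acz _ _ _ no_med'; rewrite leqNgt lt_per.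
Qed.

Definition disjoint_geodesic_triangle u v w : Prop :=
  2 * maxn (d u v) (maxn (d u w) (d v w)) < d u v + d u w + d v w /\
  (forall p1 p2 p3 : seq T,
     shortest_path e u v p1 -> shortest_path e v w p2 ->
     shortest_path e w u p3 ->
     [/\ edge_disjoint u p1 v p2, edge_disjoint v p2 w p3
       & edge_disjoint u p1 w p3]).

Lemma min_no_median_disjoint u v w : no_median u v w ->
  (forall u' v' w', no_median u' v' w' -> perimeter u v w <= perimeter u' v' w') ->
  disjoint_geodesic_triangle u v w.
Proof.
move=> no_med min_uvw; split.
  move: (forallP no_med u) (forallP no_med v) (forallP no_med w).
  rewrite /median /dist_sum /perimeter !dist_xx.
  by rewrite (dist_sym v u) (dist_sym w u) (dist_sym w v); lia.
have min_vwu u' v' w' : no_median u' v' w' -> perimeter v w u <= perimeter u' v' w'.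
  by rewrite perimeter_rot; exact: min_uvw.
have min_wuv u' v' w' : no_median u' v' w' -> perimeter w u v <= perimeter u' v' w'.
  by rewrite perimeter_rot; exact: min_vwu.
move=> p1 p2 p3 g1 g2 g3; split.
- exact: consecutive_geodesics_disjoint no_med min_uvw g1 g2.
- by apply: consecutive_geodesics_disjoint _ min_vwu g2 g3; rewrite no_median_rot.
- have no_med_wuv : no_median w u v by rewrite 2!no_median_rot.
  have := consecutive_geodesics_disjoint no_med_wuv min_wuv g3 g1.
  by rewrite /edge_disjoint has_sym.
Qed.

Lemma disjoint_geodesic_triangle_no_median x u v w :
  disjoint_geodesic_triangle u v w -> ~~ median x u v w.
Proof.
case=> strict disj; apply/negP => med.
have [p1 [p3 [g1 g3 shared]]] := median_shared_edge med strict.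
have [p2 g2] := exists_shortest_path v w.
by have [_ _] := disj p1 p2 p3 g1 g2 g3; apply/negP.
Qed.

Lemma exists_median u v w :
  ~ (exists u v w, disjoint_geodesic_triangle u v w) -> exists x, median x u v w.
Proof.
move=> no_tri; case: (boolP (no_median u v w)) => [no_med | /forallPn[x /negPn]];
  last by exists x.
pose per (t : T * T * T) := perimeter t.1.1 t.1.2 t.2.
case: (@arg_minnP _ (u, v, w) (fun t => no_median t.1.1 t.1.2 t.2) per no_med).
move=> [[a b] c] /= no_med_abc min_abc; case: no_tri; exists a, b, c.
apply: min_no_median_disjoint no_med_abc _ => u' v' w'.
exact: (min_abc (u', v', w')).
Qed.

Lemma all_medians_iff :
  [forall u, forall v, forall w, [exists x, median x u v w]] <->
  ~ (exists u v w, disjoint_geodesic_triangle u v w).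
Proof.
split=> [all_med [u [v [w tri]]] | no_tri].
  have /existsP[x med] := forallP (forallP (forallP all_med u) v) w.
  by move/negP: (disjoint_geodesic_triangle_no_median x tri).
apply/forallP => u; apply/forallP => v; apply/forallP => w.
by apply/existsP; apply: exists_median.
Qed.

(** * Summing over 3-sets *)

Definition pair_dist_sum (S : {set T}) := \sum_(a in S) \sum_(b in S) d a b.

Lemma sum_dist_pairs : \sum_u \sum_v d u v = 2 * wiener e.
Proof. exact: sum_sym_pairs dist_sym dist_xx. Qed.

Lemma sum_pair_dist_sum_3sets :
  \sum_(S : {set T} | #|S| == 3) pair_dist_sum S = (#|T| - 2) * (2 * wiener e).
Proof.
rewrite -sum_dist_pairs big_distrr /= (exchange_big_dep predT) //=.
apply: eq_bigr => a _; rewrite big_distrr /= (exchange_big_dep predT) //=.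
apply: eq_bigr => b _; case: (eqVneq a b) => [<- | a_b].
  by rewrite dist_xx muln0 big1.
rewrite -(card_3sets_through a_b) -sum_nat_const; apply: eq_bigl => S.
by rewrite inE andbA.
Qed.

Lemma pair_dist_sum_triple u v w : u \notin [set v; w] -> v != w ->
  pair_dist_sum [set u; v; w] = 2 * perimeter u v w.
Proof.
move=> u_vw v_w; rewrite /pair_dist_sum !(sum_triple _ u_vw v_w) /perimeter.
by rewrite !dist_xx (dist_sym v u) (dist_sym w u) (dist_sym w v); lia.
Qed.

Lemma pair_dist_sum_le_steiner (S : {set T}) :
  #|S| == 3 -> pair_dist_sum S <= 4 * steiner e S.
Proof.
case/cards3P=> u [v [w [u_vw v_w ->]]].
rewrite pair_dist_sum_triple // -[4]/(2 * 2) -mulnA leq_mul2l.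
exact: perimeter_le_steiner3.
Qed.

Lemma pair_dist_sum_triple_eq u v w : u \notin [set v; w] -> v != w ->
  (pair_dist_sum [set u; v; w] == 4 * steiner e [set u; v; w]) =
  [exists x, median x u v w].
Proof.
move=> u_vw v_w; rewrite pair_dist_sum_triple // -[4]/(2 * 2) -mulnA eqn_mul2l /=.
by rewrite eq_sym; apply/steiner3_medianP/existsP.
Qed.

Lemma steiner_tight_3setsE :
  [forall (S : {set T} | #|S| == 3), pair_dist_sum S == 4 * steiner e S] =
  [forall u, forall v, forall w, [exists x, median x u v w]].
Proof.
apply/forall_inP/forallP => [tight u | all_med S /cards3P[u [v [w [u_vw v_w ->]]]]].
  apply/forallP => v; apply/forallP => w.
  have [/andP[u_vw v_w] | /median_degenerate/existsP //] :=
    boolP [&& u \notin [set v; w] & v != w].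
  by rewrite -pair_dist_sum_triple_eq // tight //; apply/cards3P; exists u, v, w.
by rewrite pair_dist_sum_triple_eq // (forallP (forallP (all_med u) v) w).
Qed.

Lemma wiener3_leqif : (#|T| - 2) * wiener e <= 2 * wiener3 e
  ?= iff [forall u, forall v, forall w, [exists x, median x u v w]].
Proof.
have := @leqif_sum _ (fun S : {set T} => #|S| == 3) _ _ _
  (fun S S3 => leqif_eq (pair_dist_sum_le_steiner S3)).
rewrite sum_pair_dist_sum_3sets -big_distrr /= -/(wiener3 e) steiner_tight_3setsE.
rewrite mulnCA -[4]/(2 * 2) -mulnA => -[le_W eq_W]; split.
  by rewrite -(leq_pmul2l (isT : 0 < 2)).
by rewrite -(eqn_pmul2l (isT : 0 < 2)).
Qed.

End Graph.

Theorem theorem4 (T : finType) (e : rel T)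
  (e_sym : symmetric e) (e_irr : irreflexive e)
  (e_conn : forall u v : T, connect e u v)
  (hn : 3 <= #|T|) :
  (#|T| - 2) * wiener e <= 2 * wiener3 e /\
  (2 * wiener3 e = (#|T| - 2) * wiener e <->
   ~ (exists u v w : T,
        2 * maxn (dist e u v) (maxn (dist e u w) (dist e v w))
          < dist e u v + dist e u w + dist e v w /\
        (forall p1 p2 p3 : seq T,
           shortest_path e u v p1 -> shortest_path e v w p2 ->
           shortest_path e w u p3 ->
           [/\ edge_disjoint u p1 v p2, edge_disjoint v p2 w p3
             & edge_disjoint u p1 w p3]))).
Proof.
(* [hn] is unused: the statement also holds for [#|T| <= 2], where both sides vanish. *)
have [le_W3 eq_W3] := wiener3_leqif e_sym e_conn.
split=> //; apply: iff_trans (all_medians_iff e_sym e_irr e_conn).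
by rewrite -eq_W3 eq_sym; split=> /eqP.
Qed.
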